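(* Let $G$ be a $4$-graph, let $A,B\subseteq V(G)$ be disjoint, and suppose $G$ is $\varepsilon$-close to $G^{\mathrm{odd}}(A,B)$ via some $\mathcal T\subseteq\binom{A\cup B}3$, where $\varepsilon\le0.1$. If $x_1x_2\cdots x_{\ell+3}$ is a tight walk in $G^{\mathrm{odd}}(A,B)$ with $\ell\ge6$ such that $\{x_1,x_2,x_3\}\in\mathcal T$ and $\{x_{\ell+1},x_{\ell+2},x_{\ell+3}\}\in\mathcal T$, then there are vertices $y_4,\dots,y_\ell\in V(G)$ such that $x_1x_2x_3y_4\cdots y_\ell x_{\ell+1}x_{\ell+2}x_{\ell+3}$ is a tight walk in $G$.
   Context: A $4$-graph is a $4$-uniform hypergraph. $G^{\mathrm{odd}}(A,B)$ is the $4$-graph on $A\cup B$ whose edges are the $4$-subsets meeting $A$ in an odd number of vertices. A tight walk in a $4$-graph $H$ is a sequence of (not necessarily distinct) vertices $v_1v_2\cdots v_m$, $m\ge4$, such that every four consecutive vertices $v_{i+1},v_{i+2},v_{i+3},v_{i+4}$ form an edge of $H$ (so they are distinct). For a triple $\{x,y,z\}\subseteq A\cup B$, its neighborhood in $G^{\mathrm{odd}}(A,B)$ is $B$ if an odd number of $x,y,z$ lie in $A$ and $A$ otherwise. $\partial\mathcal T$ is the set of pairs contained in some triple of $\mathcal T$. $G$ is $\varepsilon$-close to $G^{\mathrm{odd}}(A,B)$ via $\mathcal T\subseteq\binom{A\cup B}3$ if: (1) for each $\{x,y,z\}\in\mathcal T$ with neighborhood $U\in\{A,B\}$ in $G^{\mathrm{odd}}(A,B)$,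 the number of $u\in U$ with $\{x,y,z,u\}\in E(G)$ is at least $(1-\varepsilon)|U|$; (2) for each $\{x,y\}\in\partial\mathcal T$, the number of $z\in A$ with $\{x,y,z\}\in\mathcal T$ is at least $(1-\varepsilon)|A|$, and the number of $z\in B$ with $\{x,y,z\}\in\mathcal T$ is at least $(1-\varepsilon)|B|$; (3) for each $x\in A\cup B$, the number of $y\in A$ with $\{x,y\}\in\partial\mathcal T$ is at least $(1-\varepsilon)|A|$, and the number of $y\in B$ with $\{x,y\}\in\partial\mathcal T$ is at least $(1-\varepsilon)|B|$. *)

From mathcomp Require Import all_boot all_order all_algebra.
Set Implicit Arguments. Unset Strict Implicit. Unset Printing Implicit Defensive.
Import Order.TTheory GRing.Theory Num.Theory.

(* A 4-graph on vertex type V is an edge set H : {set {set V}} whose edges all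
   have exactly 4 elements.  Its vertex set is the whole finite type V. *)
Definition is_4graph (V : finType) (H : {set {set V}}) : Prop :=
  forall e, e \in H -> (#|e| = 4)%N.

Definition Godd (V : finType) (A B : {set V}) : {set {set V}} :=
  [set e : {set V} | [&& #|e| == 4%N, e \subset A :|: B & odd #|e :&: A|]].

Definition tight_walk (V : finType) (H : {set {set V}}) (s : seq V) : Prop :=
  (4 <= size s)%N /\
  forall i, (i + 4 <= size s)%N ->
    uniq (take 4 (drop i s)) /\ [set x in take 4 (drop i s)] \in H.

(* neighbourhood of a triple in G^odd(A,B) *)
Definition odd_nbhd (V : finType) (A B : {set V}) (t : {set V}) : {set V} :=
  if odd #|t :&: A| then B else A.

Definition shadow (V : finType) (T : {set {set V}}) : {set {set V}} :=
  [set p : {set V} | (#|p| == 2%N) && [exists t in T, p \subset t]].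

Local Open Scope ring_scope.
Definition eps_close (R : realFieldType) (V : finType) (G : {set {set V}})
    (A B : {set V}) (T : {set {set V}}) (eps : R) : Prop :=
  (forall t, t \in T -> (#|t| = 3)%N /\ t \subset A :|: B) /\
  (forall t, t \in T ->
     (1 - eps) * #|odd_nbhd A B t|%:R
       <= #|[set u in odd_nbhd A B t | t :|: [set u] \in G]|%:R) /\
  (forall p, p \in shadow T ->
     (1 - eps) * #|A|%:R <= #|[set z in A | p :|: [set z] \in T]|%:R /\
     (1 - eps) * #|B|%:R <= #|[set z in B | p :|: [set z] \in T]|%:R) /\
  (forall x, x \in A :|: B ->
     (1 - eps) * #|A|%:R <= #|[set y in A | [set x; y] \in shadow T]|%:R /\
     (1 - eps) * #|B|%:R <= #|[set y in B | [set x; y] \in shadow T]|%:R).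

From mathcomp Require Import all_boot all_order all_algebra.
From mathcomp Require Import zify lra.
Set Implicit Arguments. Unset Strict Implicit. Unset Printing Implicit Defensive.
Import Order.TTheory GRing.Theory Num.Theory.

(* Walk along x and replace its interior vertices one at a time by vertices on the
   same side (A or B) as the vertex they replace; then every four consecutive
   vertices still meet A in an odd number of vertices, so the neighbourhood in
   G^odd(A,B) of any three of them is the side of the fourth.  Closeness says that
   each requirement on a new vertex (a triple of T extends to an edge of G, a pair
   of the shadow extends to a triple of T, a vertex forms a shadow pair with a given
   one) fails for at most an eps-fraction of that side, so imposing at most four
   requirements at a time leaves a choice as long as 4 eps < 1.  The walk is grown
   greedily with all consecutive triples in T; the last three new vertices a, b, c
   must also hook onto the final triple: {a, x_(l+1)} is a shadow pair,
   {b, x_(l+1), x_(l+2)} and {a, b, x_(l+1)} are triples of T, and c then completes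
   all four edges through it. *)

Notation "n .+5" := n.+4.+1 (left associativity, at level 2, format "n .+5") : nat_scope.
Notation "n .+6" := n.+5.+1 (left associativity, at level 2, format "n .+6") : nat_scope.
Notation "n .+7" := n.+6.+1 (left associativity, at level 2, format "n .+7") : nat_scope.
Notation "n .+8" := n.+7.+1 (left associativity, at level 2, format "n .+8") : nat_scope.
Notation "n .+9" := n.+8.+1 (left associativity, at level 2, format "n .+9") : nat_scope.

Section Density.

Variables (R : realDomainType) (V : finType).
Local Open Scope ring_scope.

Definition dense (e : R) (U : {set V}) (P : pred V) : Prop :=
  (1 - e) * #|U|%:R <= #|[set z in U | P z]|%:R.

Lemma denseI e1 e2 (U : {set V}) (P Q : pred V) :
  dense e1 U P -> dense e2 U Q -> dense (e1 + e2) U [pred z | P z && Q z].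
Proof.
rewrite /dense => dP dQ.
set SP := [set z in U | P z]; set SQ := [set z in U | Q z].
have -> : [set z in U | [pred z | P z && Q z] z] = SP :&: SQ.
  by apply/setP => z; rewrite !inE andbACA andbb.
have sub : (#|SP :|: SQ| <= #|U|)%N.
  by apply/subset_leq_card/subsetP => z; rewrite !inE -andb_orr => /andP[].
have := cardsUI SP SQ; move/(congr1 (fun k : nat => k%:R : R)).
move: sub; rewrite -(ler_nat R) !natrD; lra.
Qed.

Lemma dense_witness e (U : {set V}) (P : pred V) :
  e < 1 -> (0 < #|U|)%N -> dense e U P -> exists2 z, z \in U & P z.
Proof.
move=> e_lt1 U_gt0 dP; have : (0 < #|[set z in U | P z]|)%N.
  rewrite -(ltr_nat R); apply: lt_le_trans dP.
  by rewrite mulr_gt0 ?subr_gt0 ?ltr0n.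
by case/card_gt0P => z; rewrite inE => /andP[]; exists z.
Qed.

Lemma eq_dense e (U : {set V}) (P Q : pred V) : P =1 Q -> dense e U P -> dense e U Q.
Proof. by rewrite /dense => eqPQ; under eq_finset do rewrite eqPQ. Qed.

Lemma dense_predT (U : {set V}) : dense 0 U predT.
Proof.
rewrite /dense subr0 mul1r ler_nat; apply/subset_leq_card/subsetP => z zU.
by rewrite inE zU.
Qed.

Lemma quarter_sums_lt1 (e : R) :
  4 * e < 1 -> [/\ 0 + e + e < 1, e + e + e < 1 & e + e + e + e < 1].
Proof. by move=> e_small; split; lra. Qed.

End Density.

Definition window (T : Type) (g : nat -> T) (i w : nat) : seq T := map g (iota i w).

Section Windows.

Variable T : Type.
Implicit Type g : nat -> T.

Lemma window_cat g i w1 w2 :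
  window g i (w1 + w2) = window g i w1 ++ window g (i + w1) w2.
Proof. by rewrite /window iotaD map_cat. Qed.

Lemma take_window g k i w : k <= w -> take k (window g i w) = window g i k.
Proof. by move=> le_kw; rewrite /window -map_take take_iota (minn_idPl le_kw). Qed.

Lemma drop_window g k i w : drop k (window g i (k + w)) = window g (i + k) w.
Proof. by rewrite /window -map_drop drop_iota addKn. Qed.

Lemma eq_in_window g g' i w :
  (forall j, i <= j < i + w -> g j = g' j) -> window g i w = window g' i w.
Proof. by move=> eq_g; apply/eq_in_map => j; rewrite mem_iota; apply: eq_g. Qed.

Lemma window_upd_low g z k i w :
  i + w <= k -> window [eta g with k |-> z] i w = window g i w.
Proof. by move=> le_k; apply: eq_in_window => j /andP[_ lt_j] /=; rewrite ifN //; lia. Qed.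

Lemma window_upd g z k i w1 w2 : i + w1 = k ->
  window [eta g with k |-> z] i (w1 + w2).+1 = window g i w1 ++ z :: window g k.+1 w2.
Proof.
move=> <-; rewrite -[(w1 + w2).+1]addnS window_cat {2}/window /= eqxx; congr (_ ++ _ :: _).
  by apply: eq_in_window => j /andP[_ lt_j] /=; rewrite ifN //; lia.
by apply: eq_in_window => j /andP[lt_j _] /=; rewrite ifN //; lia.
Qed.

End Windows.

Section SeqSets.

Variable V : finType.
Implicit Types (s : seq V) (A : {set V}).

Lemma uniq_of_card_set s : #|[set y in s]| = size s -> uniq s.
Proof. by rewrite cardsE => /card_uniqP. Qed.

Lemma card_set_seqI s A : uniq s -> #|[set y in s] :&: A| = count (mem A) s.
Proof.
move=> s_uniq; have -> : [set y in s] :&: A = [set y in filter (mem A) s].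
  by apply/setP => y; rewrite !inE mem_filter andbC.
by rewrite cardsE -size_filter; apply/card_uniqP/filter_uniq.
Qed.

Lemma set_cat_cons s1 z s2 :
  [set y in s1 ++ z :: s2] = [set y in s1 ++ s2] :|: [set z].
Proof.
apply/setP => y; rewrite !inE !mem_cat in_cons.
by case: (y == z); rewrite ?orbT ?orbF.
Qed.

Lemma tight_walk_windowP (H : {set {set V}}) (g : nat -> V) n :
  is_4graph H ->
  tight_walk H (window g 0 n) <->
  4 <= n /\ forall i, i + 4 <= n -> [set y in window g i 4] \in H.
Proof.
move=> H4; have size_w : size (window g 0 n) = n by rewrite size_map size_iota.
have windowE i : i + 4 <= n -> take 4 (drop i (window g 0 n)) = window g i 4.
  by move=> le_in; rewrite -(subnKC le_in) -addnA drop_window take_window ?leq_addr.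
rewrite /tight_walk size_w; split=> -[le4n Hw]; split=> // i le_in.
  by have [_] := Hw i le_in; rewrite windowE.
rewrite windowE //; split; last exact: Hw.
apply: uniq_of_card_set; rewrite size_map size_iota; exact/H4/Hw.
Qed.

End SeqSets.

Section Sides.

Variables (V : finType) (A B : {set V}).

Definition side (v : V) : {set V} := if v \in A then A else B.

Lemma side_gt0 v : v \in A :|: B -> 0 < #|side v|.
Proof.
rewrite /side inE; case: ifP => [vA _|_ /= vB]; apply/card_gt0P; by exists v.
Qed.

Lemma mem_side v z : [disjoint A & B] -> z \in side v -> (z \in A) = (v \in A).
Proof. by rewrite /side => dAB; case: ifP => // _ /(disjointFl dAB). Qed.

Lemma Godd_4graph : is_4graph (Godd A B).
Proof. by move=> e; rewrite inE => /and3P[/eqP]. Qed.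

Lemma odd_nbhd_side s d :
  uniq s -> odd (count (mem A) (d :: s)) -> odd_nbhd A B [set y in s] = side d.
Proof.
rewrite /odd_nbhd /side => s_uniq; rewrite card_set_seqI //= oddD.
by case: (d \in A) => /=; [move/negbTE ->|move ->].
Qed.

End Sides.

Section Closeness.

Variables (R : realFieldType) (V : finType) (G : {set {set V}}).
Variables (A B : {set V}) (T : {set {set V}}) (eps : R).
Hypothesis closeG : eps_close G A B T eps.

Lemma uniq_of_triple s : [set y in s] \in T -> size s = 3 -> uniq s.
Proof.
have [T3 _] := closeG; move=> /T3[card3 _] size3.
by apply: uniq_of_card_set; rewrite card3 size3.
Qed.

Lemma shadow_of_triple s s' :
  [set y in s] \in T -> size s = 3 -> subseq s' s -> size s' = 2 ->
  [set y in s'] \in shadow T.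
Proof.
move=> sT size3 sub size2; rewrite inE cardsE.
have /card_uniqP -> := subseq_uniq sub (uniq_of_triple sT size3).
rewrite size2 eqxx; apply/existsP; exists [set y in s]; rewrite sT.
by apply/subsetP => y; rewrite !inE => /(mem_subseq sub).
Qed.

Lemma dense_side (e : R) v (P : pred V) :
  dense e A P -> dense e B P -> dense e (side A B v) P.
Proof. by rewrite /side; case: ifP. Qed.

Lemma dense_edge s1 d s2 :
  [set y in s1 ++ s2] \in T -> size (s1 ++ s2) = 3 ->
  odd (count (mem A) (s1 ++ d :: s2)) ->
  dense eps (side A B d) (fun z => [set y in s1 ++ z :: s2] \in G).
Proof.
move=> tT size3 odd_w; have [_ [nbhdG _]] := closeG.
rewrite -(@odd_nbhd_side _ A B (s1 ++ s2)) ?(uniq_of_triple tT) //; last first.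
  by move: odd_w; rewrite /= !count_cat /= addnCA.
by apply: eq_dense (nbhdG _ tT) => z; rewrite set_cat_cons.
Qed.

Lemma dense_triple s1 s2 v :
  [set y in s1 ++ s2] \in shadow T ->
  dense eps (side A B v) (fun z => [set y in s1 ++ z :: s2] \in T).
Proof.
have [_ [_ [shadowT _]]] := closeG; move=> /shadowT[dA dB].
by apply: eq_dense (dense_side v dA dB) => z; rewrite set_cat_cons.
Qed.

Lemma dense_pair w v :
  w \in A :|: B -> dense eps (side A B v) (fun z => [set y in [:: z; w]] \in shadow T).
Proof.
have [_ [_ [_ pairT]]] := closeG; move=> /pairT[dA dB].
have setE z : [set y in [:: z; w]] = [set w; z].
  by apply/setP => y; rewrite !inE orbC.
by apply: eq_dense (dense_side v dA dB) => z; rewrite setE.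
Qed.

End Closeness.

Section CompletingWalks.

Variables (R : realFieldType) (V : finType) (G : {set {set V}}).
Variables (A B : {set V}) (T : {set {set V}}) (eps : R).
Hypotheses (disjAB : [disjoint A & B]) (closeG : eps_close G A B T eps).
Hypothesis eps_small : (4 * eps < 1)%R.
Variables (x : nat -> V) (n : nat).
Hypothesis x_walk : forall i, i + 4 <= n -> [set y in window x i 4] \in Godd A B.

Lemma walk_vertex_in i : i + 4 <= n -> x i.+3 \in A :|: B.
Proof.
move/x_walk; rewrite inE => /and3P[_ /subsetP sub _]; apply: sub.
by rewrite inE /window /= !inE eqxx !orbT.
Qed.

Lemma odd_window g i :
  (forall j, (g j \in A) = (x j \in A)) -> i + 4 <= n ->
  odd (count (mem A) (window g i 4)).
Proof.
move=> g_side /x_walk; rewrite inE => /and3P[/eqP card4 _].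
have -> : count (mem A) (window g i 4) = count (mem A) (window x i 4).
  by rewrite !count_map; apply: eq_count => j /=; rewrite g_side.
by rewrite card_set_seqI // uniq_of_card_set // card4 size_map size_iota.
Qed.

(* The agreement with x from position k on is stated for [d + k] so that
   [1 + k] is convertible to [k.+1]. *)
Definition partial_walk (g : nat -> V) (k : nat) : Prop :=
  [/\ forall i, i < 3 -> g i = x i,
      forall d, g (d + k) = x (d + k),
      forall i, (g i \in A) = (x i \in A),
      forall i, i + 3 <= k -> [set y in window g i 3] \in T &
      forall i, i + 4 <= k -> [set y in window g i 4] \in G].

Lemma partial_walk_upd j g z :
  partial_walk g j.+3 -> (z \in A) = (x j.+3 \in A) ->
  [set y in [:: g j.+1; g j.+2; z]] \in T ->
  [set y in [:: g j; g j.+1; g j.+2; z]] \in G ->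
  partial_walk [eta g with j.+3 |-> z] j.+4.
Proof.
move=> [g_lo g_hi g_side g_T g_G] z_side zT zG.
split=> [i lt_i | d | i | i le_i | i le_i] /=.
- by rewrite ifN ?g_lo //; lia.
- by rewrite ifN -addSnnS ?g_hi //; lia.
- by case: eqP => [->|_].
- have [lt_i|ge_i] := ltnP (i + 3) j.+4; first by rewrite window_upd_low ?g_T.
  have -> : i = j.+1 by lia.
  by rewrite (window_upd g z 0 (addn2 j.+1)).
- have [lt_i|ge_i] := ltnP (i + 4) j.+4; first by rewrite window_upd_low ?g_G.
  have -> : i = j by lia.
  by rewrite (window_upd g z 0 (addn3 j)).
Qed.

Lemma partial_walk_extend j g (Q : pred V) (e : R) :
  j + 4 <= n -> partial_walk g j.+3 -> (e + eps + eps < 1)%R ->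
  dense e (side A B (x j.+3)) Q ->
  exists2 z, Q z & partial_walk [eta g with j.+3 |-> z] j.+4.
Proof.
move=> le_jn pw e_small dQ; have [_ g_hi g_side g_T _] := pw.
have tT : [set y in [:: g j; g j.+1; g j.+2]] \in T by apply: g_T; rewrite addn3.
have dG : dense eps (side A B (x j.+3))
    (fun z => [set y in [:: g j; g j.+1; g j.+2; z]] \in G).
  rewrite -(g_hi 0).
  exact: (dense_edge closeG (s1 := [:: _; _; _]) (s2 := [::]) tT _ (odd_window g_side le_jn)).
have dT : dense eps (side A B (x j.+3))
    (fun z => [set y in [:: g j.+1; g j.+2; z]] \in T).
  apply: (dense_triple closeG (s1 := [:: _; _]) (s2 := [::])).
  exact: (shadow_of_triple closeG tT erefl (drop_subseq _ 1) erefl).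
have [z zU /andP[/andP[Qz zG] zT]] :=
  dense_witness e_small (side_gt0 (walk_vertex_in le_jn)) (denseI (denseI dQ dG) dT).
by exists z; last exact: partial_walk_upd pw (mem_side disjAB zU) zT zG.
Qed.

Lemma partial_walk_start j :
  [set y in window x 0 3] \in T -> j + 3 <= n -> exists g, partial_walk g j.+3.
Proof.
move=> startT; elim: j => [_|j IH le_jn].
  exists x; split=> // i le_i; last lia.
  by have -> : i = 0 by lia.
have [g pw] := IH (ltnW le_jn).
have [eps2 _ _] := quarter_sums_lt1 eps_small.
have [|z _ pw'] := partial_walk_extend _ pw eps2 (dense_predT _ _); first lia.
by exists [eta g with j.+3 |-> z].
Qed.

Lemma fill_gap k g :
  k + 7 <= n -> (forall i, (g i \in A) = (x i \in A)) ->
  [set y in [:: g k; g k.+1; g k.+2]] \in T ->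
  [set y in [:: g k.+1; g k.+2; g k.+4]] \in T ->
  [set y in [:: g k.+2; g k.+4; g k.+5]] \in T ->
  [set y in [:: g k.+4; g k.+5; g k.+6]] \in T ->
  exists z, [/\ [set y in [:: g k; g k.+1; g k.+2; z]] \in G,
                 [set y in [:: g k.+1; g k.+2; z; g k.+4]] \in G,
                 [set y in [:: g k.+2; z; g k.+4; g k.+5]] \in G &
                 [set y in [:: z; g k.+4; g k.+5; g k.+6]] \in G].
Proof.
move=> le_kn g_side t0 t1 t2 t3.
have odd_w i : i <= k.+3 -> odd (count (mem A) (window g i 4)).
  by move=> le_i; apply: odd_window => //; lia.
have d0 := dense_edge closeG (s1 := [:: _; _; _]) (s2 := [::]) t0 erefl (odd_w k ltac:(lia)).
have d1 := dense_edge closeG (s1 := [:: _; _]) (s2 := [:: _]) t1 erefl (odd_w k.+1 ltac:(lia)).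
have d2 := dense_edge closeG (s1 := [:: _]) (s2 := [:: _; _]) t2 erefl (odd_w k.+2 ltac:(lia)).
have d3 := dense_edge closeG (s1 := [::]) (s2 := [:: _; _; _]) t3 erefl (odd_w k.+3 ltac:(lia)).
have side_gap_gt0 : 0 < #|side A B (g k.+3)|.
  by rewrite /side g_side -/(side A B _) side_gt0 // walk_vertex_in //; lia.
have [_ _ eps4] := quarter_sums_lt1 eps_small.
have [z _ /andP[/andP[/andP[z0 z1] z2] z3]] :=
  dense_witness eps4 side_gap_gt0 (denseI (denseI (denseI d0 d1) d2) d3).
by exists z.
Qed.

Lemma partial_walk_close j g c :
  partial_walk g j.+5 ->
  [set y in [:: g j.+2; g j.+3; g j.+4; c]] \in G ->
  [set y in [:: g j.+3; g j.+4; c; g j.+6]] \in G ->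
  [set y in [:: g j.+4; c; g j.+6; g j.+7]] \in G ->
  [set y in [:: c; g j.+6; g j.+7; g j.+8]] \in G ->
  [/\ window [eta g with j.+5 |-> c] 0 3 = window x 0 3,
      window [eta g with j.+5 |-> c] j.+6 3 = window x j.+6 3 &
      forall i, i + 4 <= j.+9 -> [set y in window [eta g with j.+5 |-> c] i 4] \in G].
Proof.
move=> [g_lo g_hi _ _ g_G] c0 c1 c2 c3; split.
- by apply: eq_in_window => i /= lt_i; rewrite ifN ?g_lo //; lia.
- apply: eq_in_window => i /andP[le_i _] /=; rewrite ifN; last lia.
  by rewrite -(subnK (ltnW le_i)) g_hi.
move=> i le_i; have [lt_i|ge_i] := ltnP (i + 4) j.+6.
  by rewrite window_upd_low ?g_G.
have [->|[->|[->|->]]] : i = j.+2 \/ i = j.+3 \/ i = j.+4 \/ i = j.+5 by lia.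
- by rewrite (window_upd g c 0 (addn3 j.+2)).
- by rewrite (window_upd g c 1 (addn2 j.+3)).
- by rewrite (window_upd g c 2 (addn1 j.+4)).
- by rewrite (window_upd g c 3 (addn0 j.+5)).
Qed.

Lemma partial_walk_complete j g :
  n = j.+9 -> partial_walk g j.+3 -> [set y in window x j.+6 3] \in T ->
  exists g', [/\ window g' 0 3 = window x 0 3, window g' j.+6 3 = window x j.+6 3 &
                 forall i, i + 4 <= n -> [set y in window g' i 4] \in G].
Proof.
move=> n_eq pw endT; have [_ eps3 eps4] := quarter_sums_lt1 eps_small.
have [le_a le_b le_gap] : [/\ j + 4 <= n, j.+1 + 4 <= n & j.+2 + 7 <= n].
  by rewrite n_eq; split; lia.
have x6_in : x j.+6 \in A :|: B by apply: walk_vertex_in; lia.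
have [a a_x6 pw_a] := partial_walk_extend le_a pw eps3 (dense_pair closeG (x j.+3) x6_in).
have dT1 := dense_triple closeG (s1 := [::]) (s2 := [:: x j.+6; x j.+7]) (x j.+4)
  (shadow_of_triple closeG endT erefl (take_subseq _ 2) erefl).
have dT2 := dense_triple closeG (s1 := [:: a]) (s2 := [:: x j.+6]) (x j.+4) a_x6.
have [b /andP[b_T1 b_T2] pw_b] := partial_walk_extend le_b pw_a eps4 (denseI dT1 dT2).
set g2 := [eta _ with j.+4 |-> b] in pw_b.
have [_ g2_hi g2_side g2_T _] := pw_b.
have [g2_a g2_b] : g2 j.+3 = a /\ g2 j.+4 = b by rewrite /= (ltn_eqF (ltnSn _)) !eqxx.
have t0 : [set y in window g2 j.+2 3] \in T by rewrite g2_T // addn3.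
have t1 : [set y in [:: g2 j.+3; g2 j.+4; g2 j.+6]] \in T by rewrite g2_a g2_b (g2_hi 1).
have t2 : [set y in [:: g2 j.+4; g2 j.+6; g2 j.+7]] \in T by rewrite g2_b (g2_hi 1) (g2_hi 2).
have t3 : [set y in [:: g2 j.+6; g2 j.+7; g2 j.+8]] \in T by rewrite (g2_hi 1) (g2_hi 2) (g2_hi 3).
have [c [c0 c1 c2 c3]] := fill_gap le_gap g2_side t0 t1 t2 t3.
have [w_lo w_hi w_G] := partial_walk_close pw_b c0 c1 c2 c3.
by exists [eta g2 with j.+5 |-> c]; split=> //; rewrite n_eq.
Qed.

End CompletingWalks.

Local Open Scope ring_scope.

Theorem lemma6p5 (R : realFieldType) (V : finType) (G : {set {set V}})
  (A B : {set V}) (T : {set {set V}}) (eps : R) (l : nat) (xs : seq V) :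
  is_4graph G -> [disjoint A & B] ->
  eps_close G A B T eps -> eps <= 1 / 10 ->
  (6 <= l)%N -> size xs = (l + 3)%N ->
  tight_walk (Godd A B) xs ->
  [set x in take 3 xs] \in T ->
  [set x in drop l xs] \in T ->
  exists ys : seq V, size ys = (l - 3)%N /\
    tight_walk G (take 3 xs ++ ys ++ drop l xs).
Proof.
move=> G4 dAB closeG eps_le le6l size_xs walk startT endT.
have eps_small : 4 * eps < 1 by lra.
have x0 : V by move: size_xs; case: (xs) => [|v ? _]; [rewrite addn3 | exact: v].
set x := nth x0 xs.
have xsE : xs = window x 0 (l + 3) by rewrite -(mkseq_nth x0 xs) size_xs.
rewrite xsE take_window ?leq_addl // drop_window in walk startT endT *.
have [_ x_walk] := (tight_walk_windowP _ _ (@Godd_4graph _ A B)).1 walk.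
have [j lE] : exists j, l = j.+6 by exists (l - 6)%N; lia.
have [le_j n_eq] : (j + 3 <= l + 3)%N /\ l + 3 = j.+9 by rewrite lE; split; lia.
have [g pw] := partial_walk_start dAB closeG eps_small x_walk startT le_j.
rewrite lE in endT.
have [g' [g'_lo g'_hi g'_G]] := partial_walk_complete dAB closeG eps_small x_walk n_eq pw endT.
exists (window g' 3 j.+3); split; first by rewrite size_map size_iota lE.
rewrite -g'_lo lE -g'_hi -!window_cat (tight_walk_windowP _ _ G4).
by split=> [|i le_i]; [lia | apply: g'_G; lia].
Qed.
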